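(* Let $D$ be a connected locally semicomplete digraph in which no inclusion-wise maximal weak hub is mixed. Then either $D$ is semicomplete with a universal vertex, or there exist $k\ge 2$ pairwise disjoint sets $X_1,\dots,X_k$ partitioning $V(D)$ such that each $D[X_i]$ is strongly connected and the digraph obtained by contracting every $X_i$ (vertices $X_1,\dots,X_k$, arc $X_iX_j$ for $i\ne j$ whenever $D$ has an arc from $X_i$ to $X_j$) is a round oriented graph.
   Context: Digraphs are finite, no loops, no parallel arcs; digons allowed; an oriented graph has no digon. $x^+$, $x^-$ are out- and in-neighbourhoods. Connected means the underlying undirected graph is connected. Semicomplete: any two distinct vertices joined by at least one arc; locally semicomplete: every $x^+$ and every $x^-$ induces a semicomplete digraph. A universal vertex is $x$ with $x^+=x^-=V(D)\setminus\{x\}$. A weak hub is a set $X\subseteq V(D)$ with $D[X]$ strongly connected such that some vertex $x$ satisfies $X\subseteq x^-\setminus x^+$ or $X\subseteq x^+\setminus x^-$. A weak hub $X$ is mixed if there exist $x\notin X$ and $u,v\in X$ such that $xu$ and $vx$ are arcs. An oriented graph is round if there is a cyclic order of its vertices such that for every arc $xy$ and every vertex $z$ strictly between $x$ and $y$ going forward from $x$ to $y$ in the cyclic order, both $xz$ and $zy$ are arcs. *)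

(* A digraph is a finite vertex type V with an arc relation
   arc : rel V that is irreflexive (no loops); parallel arcs are impossible,
   digons (arc x y && arc y x) are allowed. *)
From mathcomp Require Import all_boot fingroup perm.
Set Implicit Arguments. Unset Strict Implicit. Unset Printing Implicit Defensive.

Section Digraphs.
Variable V : finType.
Variable arc : rel V.

Definition loopless : Prop := forall x, ~~ arc x x.

Definition dconnected : Prop :=
  0 < #|V| /\ forall x y, connect (fun a b => arc a b || arc b a) x y.

Definition strong_in (X : {set V}) : Prop :=
  X != set0 /\
  forall x y, x \in X -> y \in X ->
    connect (fun a b => [&& arc a b, a \in X & b \in X]) x y.

Definition outN (x : V) : {set V} := [set y | arc x y].
Definition inN (x : V) : {set V} := [set y | arc y x].

Definition semicomplete_on (S : {set V}) : Prop :=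
  forall y z, y \in S -> z \in S -> y != z -> arc y z || arc z y.

Definition semicomplete : Prop := semicomplete_on [set: V].

Definition locally_semicomplete : Prop :=
  forall x, semicomplete_on (outN x) /\ semicomplete_on (inN x).

Definition universal (x : V) : Prop :=
  forall y, y != x -> arc x y && arc y x.

Definition weak_hub (X : {set V}) : Prop :=
  strong_in X /\
  exists x, X \subset inN x :\: outN x \/ X \subset outN x :\: inN x.

Definition maximal_weak_hub (X : {set V}) : Prop :=
  weak_hub X /\ forall Y, weak_hub Y -> X \subset Y -> Y = X.

Definition mixed (X : {set V}) : Prop :=
  exists x u v, [/\ x \notin X, u \in X, v \in X, arc x u & arc v x].

End Digraphs.

Definition contraction (V : finType) (arc : rel V) (k : nat)
    (X : 'I_k -> {set V}) : rel 'I_k :=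
  fun i j => (i != j) && [exists a in X i, exists b in X j, arc a b].

Definition oriented (T : finType) (r : rel T) : Prop :=
  forall x y, ~~ (r x y && r y x).

(* cyclic order on 'I_k given by a bijection pos : positions 0..k-1 around the
   cycle; z strictly between x and y going forward from x to y *)
Definition cyc_between (k : nat) (pos : {perm 'I_k}) (x y z : 'I_k) : bool :=
  (0 < (pos z + k - pos x) %% k) && ((pos z + k - pos x) %% k < (pos y + k - pos x) %% k).

Definition round (k : nat) (r : rel 'I_k) : Prop :=
  oriented r /\
  exists pos : {perm 'I_k}, forall x y z,
    r x y -> cyc_between pos x y z -> r x z && r z y.

Definition is_partition (V : finType) (k : nat) (X : 'I_k -> {set V}) : Prop :=
  (forall i j, i != j -> [disjoint X i & X j]) /\
  (forall v : V, exists i, v \in X i).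

From mathcomp Require Import all_boot fingroup perm.
From Stdlib Require Import Classical ClassicalEpsilon.
Set Implicit Arguments. Unset Strict Implicit. Unset Printing Implicit Defensive.

(* The proof splits on whether some vertex lies in no maximal weak hub.
   - If v is such a vertex, every arc at v is a digon (else {v} would be a
     weak hub), and this property spreads along arcs: by non-mixedness a
     maximal hub through a neighbour would lie on one side of v.  So every
     arc of D is a digon, and a connected locally semicomplete digraph with
     only digons is complete.
   - Otherwise the maximal weak hubs cover V; two of them sharing a vertex
     coincide, so they partition V.  Non-mixedness makes them modules with
     one-way arcs between them, hence their contraction is a connected
     locally transitive local tournament (a directed triangle of hubs in a
     neighbourhood would be a larger weak hub).  Such tournaments are round:
     the map sending a vertex to the source of its out-neighbourhood extends
     to a single-cycle permutation, whose cyclic order witnesses roundness. *)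

Section ConnectFacts.
Variables (T : finType) (e : rel T).

Lemma connect_propagate (Q : T -> Prop) s t :
  connect e s t -> Q s -> (forall a b, e a b -> Q a -> Q b) -> Q t.
Proof.
move/connectP=> [q eq ->] Qs step; elim: q s eq Qs => //= b q IH s /andP[esb eq] Qs.
exact: IH eq (step _ _ esb Qs).
Qed.

Lemma connect_propagate_back (Q : T -> Prop) s t :
  connect e s t -> Q t -> (forall a b, e a b -> Q b -> Q a) -> Q s.
Proof.
move/connectP=> [q eq ->] Qt step; elim: q s eq Qt => //= b q IH s /andP[esb eq] Qt.
exact: step _ _ esb (IH b eq Qt).
Qed.

Lemma connect_exit (P : pred T) s t :
  connect e s t -> P s -> ~~ P t -> exists a b, [/\ e a b, P a & ~~ P b].
Proof.
move/connectP=> [q eq ->]; elim: q s eq => /= [|b q IH] s; first by move=> _ ->.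
move=> /andP[esb eq] Ps Pt; case Pb: (P b); first exact: IH eq Pb Pt.
by exists s, b; rewrite esb Ps Pb.
Qed.

End ConnectFacts.

Lemma perm_extend (T : finType) (D : {set T}) (f : T -> T) :
  {in D &, injective f} -> exists p : {perm T}, {in D, forall x, p x = f x}.
Proof.
move=> finj; set I := f @: D.
have cardC : #|~: D| = #|~: I|.
  by apply/eqP; rewrite -(eqn_add2l #|D|) cardsC -{1}(card_in_imset finj) cardsC.
(* outside D, send the n-th element of ~: D to the n-th element of ~: I *)
pose g x := if x \in D then f x else nth x (enum (~: I)) (index x (enum (~: D))).
have idx_lt x : x \notin D -> index x (enum (~: D)) < size (enum (~: I)).
  by move=> xD; rewrite -cardE -cardC cardE index_mem mem_enum inE.
have gnD x : x \notin D -> g x \in ~: I.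
  by move=> xD; rewrite /g (negbTE xD) -mem_enum mem_nth ?idx_lt.
have ginj : injective g.
  move=> x y; case xD: (x \in D); case yD: (y \in D).
  - by rewrite /g xD yD; apply: finj.
  - by move=> E; have := gnD y (negbT yD); rewrite -E /g xD inE imset_f.
  - by move=> E; have := gnD x (negbT xD); rewrite E /g yD inE imset_f.
  - rewrite /g xD yD (set_nth_default x y (idx_lt y (negbT yD))) => /eqP.
    rewrite (nth_uniq _ (idx_lt x (negbT xD)) (idx_lt y (negbT yD)) (enum_uniq _)).
    move=> /eqP/(congr1 (nth x (enum (~: D)))).
    by rewrite !nth_index ?mem_enum ?inE ?xD ?yD.
by exists (perm ginj) => x xD; rewrite permE /g xD.
Qed.

Section LocallyTransitive.
Variables (T : finType) (r : rel T).

Record loc_trans_tournament : Prop := LocTransTournament {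
  ltt_irr : forall x, ~~ r x x;
  ltt_asym : forall x y, r x y -> ~~ r y x;
  ltt_out_tour : forall x a b, r x a -> r x b -> a != b -> r a b || r b a;
  ltt_in_tour : forall x a b, r a x -> r b x -> a != b -> r a b || r b a;
  ltt_out_acyc : forall x a b c,
    r x a -> r x b -> r x c -> r a b -> r b c -> r c a -> False;
  ltt_in_acyc : forall x a b c,
    r a x -> r b x -> r c x -> r a b -> r b c -> r c a -> False }.

Hypothesis G : loc_trans_tournament.

Definition out_source (x s : T) : bool :=
  r x s && [forall a, r x a ==> (a != s) ==> r s a].

Lemma out_source_arc x s : out_source x s -> r x s.
Proof. by case/andP. Qed.

Lemma out_source_dom x s a : out_source x s -> r x a -> a != s -> r s a.
Proof. by case/andP=> _ /forallP/(_ a) /implyP H /H/implyP. Qed.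

(* A nonempty out-neighbourhood has a source: take an out-neighbour s with
   the most common out-neighbours with x; an out-neighbour a beating s would
   have strictly more. *)
Lemma out_source_exists x a0 : r x a0 -> exists s, out_source x s.
Proof.
move=> xa0; pose F s := #|[set b | r x b && r s b]|.
case: (@arg_maxnP T a0 (r x) F xa0) => s xs smax.
exists s; rewrite /out_source xs; apply/forallP => a; apply/implyP => xa.
apply/implyP => nas; case/orP: (ltt_out_tour G xa xs nas) => // a_s.
suff : F s < F a by rewrite ltnNge [F a <= _](smax a xa).
apply: proper_card; apply/properP; split; last first.
  by exists s; rewrite !inE ?xs ?a_s ?(negbTE (ltt_irr G s)) ?andbF.
apply/subsetP => b; rewrite !inE => /andP[xb sb]; rewrite xb /=.
have nab : a != b by apply: contraTneq sb => <-; apply: ltt_asym.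
case/orP: (ltt_out_tour G xa xb nab) => // ba.
by case: (ltt_out_acyc G xa xs xb a_s sb ba).
Qed.

Definition first_out (x : T) : T := odflt x [pick s | out_source x s].

Lemma first_outP x a : r x a -> out_source x (first_out x).
Proof.
case/out_source_exists=> s xs; rewrite /first_out.
by case: pickP => [//|/(_ s)]; rewrite xs.
Qed.

Definition successor (p : {perm T}) : Prop :=
  forall w a, r w a -> out_source w (p w).

(* Two vertices with the same out-source s are both in-neighbours of s,
   hence comparable, which contradicts s dominating the later one. *)
Lemma successor_exists : exists p : {perm T}, successor p.
Proof.
pose D := [set x | [exists a, r x a]].
have inD x : x \in D -> exists a, r x a by rewrite inE => /existsP.
have : {in D &, injective first_out}.
  move=> x x' /inD[a /first_outP sx] /inD[a' /first_outP sx'] E.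
  rewrite -E in sx'; apply/eqP; apply/negPn/negP => nxx'.
  have [xs x's] := (out_source_arc sx, out_source_arc sx').
  have neq y : r y (first_out x) -> y != first_out x.
    by move=> ys; apply: contraTneq ys => ->; apply: ltt_irr.
  case/orP: (ltt_in_tour G xs x's nxx') => [xx' | x'x].
  - by move: (ltt_asym G (out_source_dom sx xx' (neq _ x's))); rewrite x's.
  - by move: (ltt_asym G (out_source_dom sx' x'x (neq _ xs))); rewrite xs.
case/perm_extend=> p pE; exists p => w a wa.
by rewrite pE ?(first_outP wa) // inE; apply/existsP; exists a.
Qed.

Section SuccessorWalk.
Variable p : {perm T}.
Hypothesis p_succ : successor p.

Definition between (w y : T) : {set T} := [set u | r w u && r u y].

Lemma successor_step x y w : r x y -> r w y -> (w = x \/ r x w) -> p w != y ->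
  [/\ r x (p w), r (p w) y & #|between (p w) y| < #|between w y|].
Proof.
move=> xy wy wx pwy; have sw := p_succ wy; have wp := out_source_arc sw.
have py : r (p w) y by apply: out_source_dom sw wy _; rewrite eq_sym.
have xp : r x (p w).
  case: wx => [<- // | xw].
  have nxp : x != p w by apply: contraTneq xw => ->; apply: ltt_asym.
  case/orP: (ltt_in_tour G xy py nxp) => // px.
  by case: (ltt_in_acyc G xy wy py xw wp px).
split => //; apply: proper_card; apply/properP; split; last first.
  by exists (p w); rewrite !inE ?wp ?py ?(negbTE (ltt_irr G _)).
apply/subsetP => u; rewrite !inE => /andP[pu uy]; rewrite uy andbT.
have nwu : w != u by apply: contraTneq pu => <-; apply: ltt_asym.
case/orP: (ltt_in_tour G wy uy nwu) => // uw.
by case: (ltt_in_acyc G wy py uy wp pu uw).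
Qed.

Lemma successor_walk x y : r x y -> exists j, [/\ 0 < j, iter j p x = y &
  forall l, 0 < l < j -> r x (iter l p x) && r (iter l p x) y].
Proof.
move=> xy.
suff walk n w : #|between w y| < n -> r w y -> (w = x \/ r x w) ->
    exists j, [/\ 0 < j, iter j p w = y &
      forall l, 0 < l < j -> r x (iter l p w) && r (iter l p w) y].
  exact: walk (leqnn _) xy (or_introl erefl).
elim: n w => // n IH w lt_n wy wx.
have [pwy | npwy] := eqVneq (p w) y.
  by exists 1; split => // -[|[|l]].
have [xp py lt] := successor_step xy wy wx npwy.
have [j [j0 jy jl]] := IH (p w) (leq_trans lt lt_n) py (or_intror xp).
exists j.+1; split; rewrite ?iterSr //.
case=> [|[|l]] // lj; first by rewrite /= xp py.
by rewrite iterSr; apply: jl.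
Qed.

Lemma successor_fconnect :
  (forall a b, connect (fun u v => r u v || r v u) a b) -> forall a b, fconnect p a b.
Proof.
move=> conn a b; apply: (connect_sub _ (conn a b)) => u v /orP[uv | vu].
  by have [j [_ <- _]] := successor_walk uv; apply: fconnect_iter.
rewrite fconnect_sym; last exact: perm_inj.
by have [j [_ <- _]] := successor_walk vu; apply: fconnect_iter.
Qed.

End SuccessorWalk.
End LocallyTransitive.

Section CyclicPositions.
Variables (n : nat) (p : {perm 'I_n.+1}).
Hypothesis p_cyclic : forall a b, fconnect p a b.

Lemma order_cyclic z : fingraph.order p z = n.+1.
Proof.
rewrite /fingraph.order -[RHS](card_ord n.+1).
by apply: eq_card => w; rewrite inE p_cyclic.
Qed.

Lemma findex_cyclic x z : findex p x z < n.+1.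
Proof. by have := findex_max (p_cyclic x z); rewrite order_cyclic. Qed.

Definition cyc_pos (z : 'I_n.+1) : 'I_n.+1 := inord (findex p ord0 z).

Lemma cyc_posE z : cyc_pos z = findex p ord0 z :> nat.
Proof. by rewrite inordK // findex_cyclic. Qed.

Lemma cyc_pos_inj : injective cyc_pos.
Proof.
move=> a b E; rewrite -(iter_findex (p_cyclic ord0 a)) -(iter_findex (p_cyclic ord0 b)).
by rewrite -!cyc_posE E.
Qed.

Definition cyc_offset (x z : 'I_n.+1) : nat := (cyc_pos z + n.+1 - cyc_pos x) %% n.+1.

Lemma iter_full x : iter n.+1 p x = x.
Proof. by have := iter_order (@perm_inj _ p) x; rewrite order_cyclic. Qed.

Lemma iter_cycle m x : iter m p x = iter (m %% n.+1) p x.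
Proof.
rewrite {1}(divn_eq m n.+1) addnC iterD; congr (iter _ p _).
elim: (m %/ n.+1) => [|q IH]; first by rewrite mul0n.
by rewrite mulSn iterD IH iter_full.
Qed.

Lemma iter_offset x z : iter (cyc_offset x z) p x = z.
Proof.
rewrite /cyc_offset !cyc_posE -iter_cycle.
have := iter_findex (p_cyclic ord0 x); set i := findex p ord0 x => <-.
rewrite -iterD subnK; last by rewrite ltnW // ltn_addl // findex_cyclic.
by rewrite addnC iterD iter_full iter_findex.
Qed.

Lemma iter_inj_small x a b : a < n.+1 -> b < n.+1 -> iter a p x = iter b p x -> a = b.
Proof.
have fa := @findex_iter _ p x a; have fb := @findex_iter _ p x b.
rewrite order_cyclic in fa fb => lta ltb E.
by rewrite -fa // E fb.
Qed.

Lemma offset_iter x m : cyc_offset x (iter m p x) = m %% n.+1.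
Proof.
apply: (iter_inj_small (x := x)); rewrite ?ltn_mod //.
by rewrite iter_offset -iter_cycle.
Qed.

End CyclicPositions.

(* A connected locally transitive local tournament is round: the cyclic
   order is the single orbit of the successor permutation. *)
Lemma loc_trans_round k (r : rel 'I_k) : loc_trans_tournament r ->
  (forall x y, connect (fun a b => r a b || r b a) x y) -> round r.
Proof.
move=> G conn; split.
  by move=> x y; apply/negP => /andP[xy yx]; move: (ltt_asym G xy); rewrite yx.
case: k r G conn => [|n] r G conn; first by exists 1%g => -[].
have [p p_succ] := successor_exists G.
have p_cyc := successor_fconnect G p_succ conn.
exists (perm (cyc_pos_inj p_cyc)) => x y z xy.
rewrite /cyc_between !permE -!/(cyc_offset p x _) => /andP[z0 zy].
have [j [_ jy jl]] := successor_walk G p_succ xy.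
have zj : cyc_offset p x z < j.
  by apply: leq_trans zy _; rewrite -jy offset_iter // leq_mod.
by have := jl _ (introT andP (conj z0 zj)); rewrite iter_offset.
Qed.

Section WeakHubs.
Variables (V : finType) (arc : rel V).

Definition arc_in (X : {set V}) : rel V := fun a b => [&& arc a b, a \in X & b \in X].

Lemma connect_arc_in_mono (X Z : {set V}) u w :
  X \subset Z -> connect (arc_in X) u w -> connect (arc_in Z) u w.
Proof.
move=> XZ; apply: connect_sub => a b /and3P[ab aX bX].
by apply: connect1; rewrite /arc_in ab !(subsetP XZ).
Qed.

Lemma strong_in_star (Z : {set V}) c : c \in Z ->
  (forall u, u \in Z -> connect (arc_in Z) u c /\ connect (arc_in Z) c u) ->
  strong_in arc Z.
Proof.
move=> cZ H; split; first by apply/set0Pn; exists c.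
move=> x y /H[xc _] /H[_ cy]; exact: connect_trans xc cy.
Qed.

Lemma strong_inU (X Y : {set V}) v :
  strong_in arc X -> strong_in arc Y -> v \in X -> v \in Y -> strong_in arc (X :|: Y).
Proof.
move=> [_ sX] [_ sY] vX vY; apply: (@strong_in_star _ v); first by rewrite inE vX.
move=> u /setUP[uX | uY]; split;
  by [ apply: (connect_arc_in_mono (subsetUl X Y)); apply: sX
     | apply: (connect_arc_in_mono (subsetUr X Y)); apply: sY ].
Qed.

Lemma weak_hub_singleton v w :
  (arc v w && ~~ arc w v) || (arc w v && ~~ arc v w) -> weak_hub arc [set v].
Proof.
move=> H; split.
  split; first by apply/set0Pn; exists v; rewrite inE.
  by move=> x y /set1P -> /set1P ->; apply: connect0.
exists w; case/orP: H => /andP[a b]; [left | right];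
  by apply/subsetP => x /set1P ->; rewrite !inE a b.
Qed.

Lemma maximal_weak_hub_above (X : {set V}) :
  weak_hub arc X -> exists Y, maximal_weak_hub arc Y /\ X \subset Y.
Proof.
suff H n : forall W : {set V}, #|~: W| < n -> weak_hub arc W ->
    exists Y, maximal_weak_hub arc Y /\ W \subset Y by apply: H (ltnSn _).
elim: n => // n IH W cW hW.
case: (classic (maximal_weak_hub arc W)) => [mW | nmW]; first by exists W.
have [Y [hY WY nYW]] : exists Y, [/\ weak_hub arc Y, W \subset Y & Y <> W].
  apply: NNPP => none; apply: nmW; split => // Y hY WY.
  by apply: NNPP => nYW; apply: none; exists Y.
have ltWY : #|~: Y| < #|~: W|.
  by apply: proper_card; rewrite properC properEneq WY andbT eq_sym; apply/eqP.
have [Z [mZ YZ]] := IH Y (leq_trans ltWY cW) hY.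
by exists Z; split => //; apply: subset_trans YZ.
Qed.

Hypothesis arc_lsc : locally_semicomplete arc.

Lemma nonmixed_in (X : {set V}) y u : strong_in arc X -> ~ mixed arc X ->
  y \notin X -> u \in X -> arc u y -> X \subset inN arc y :\: outN arc y.
Proof.
move=> [_ sX] nmX yX uX uy.
have noout w : w \in X -> ~~ arc y w.
  by move=> wX; apply/negP => yw; apply: nmX; exists y, w, u.
apply/subsetP => a aX; rewrite !inE noout //=.
apply: (connect_propagate (Q := fun w => arc w y) (sX u a uX aX)) => // b c.
move=> /and3P[bc bX cX] b_y; have yc : y != c by apply: contraNneq yX => ->.
have [outb _] := arc_lsc b.
have := outb y c; rewrite !inE b_y bc => /(_ isT isT yc) /orP[y_c | //].
by move: (noout c cX); rewrite y_c.
Qed.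

Lemma nonmixed_out (X : {set V}) y u : strong_in arc X -> ~ mixed arc X ->
  y \notin X -> u \in X -> arc y u -> X \subset outN arc y :\: inN arc y.
Proof.
move=> [_ sX] nmX yX uX yu.
have noin w : w \in X -> ~~ arc w y.
  by move=> wX; apply/negP => wy; apply: nmX; exists y, u, w.
apply/subsetP => a aX; rewrite !inE noin //=.
apply: (connect_propagate_back (Q := fun w => arc y w) (sX a u aX uX)) => // b c.
move=> /and3P[bc bX cX] y_c; have yb : b != y by apply: contraNneq yX => <-.
have [_ inc] := arc_lsc c.
have := inc b y; rewrite !inE y_c bc => /(_ isT isT yb) /orP[b_y | //].
by move: (noin b bX); rewrite b_y.
Qed.

(* If a strongly connected set Y meeting X is one-sided with respect to a
   vertex z of X (all of Y on the same side of z), then Y stays inside X: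
   an arc of D[Y] leaving or entering X would put z on both sides. *)
Lemma one_sided_centre_inside (X Y : {set V}) z v :
  strong_in arc X -> ~ mixed arc X -> strong_in arc Y ->
  z \in X -> v \in X -> v \in Y ->
  Y \subset inN arc z :\: outN arc z \/ Y \subset outN arc z :\: inN arc z ->
  Y \subset X.
Proof.
move=> sX nmX [_ sY] zX vX vY side; apply/subsetP => y yY; apply/negPn/negP => yX.
case: side => /subsetP side.
- have [a [b [/and3P[ab _ bY] aX bX]]] := connect_exit (sY v y vY yY) vX yX.
  have := subsetP (nonmixed_in sX nmX bX aX ab) z zX.
  by have := side b bY; rewrite !inE => /andP[/negbTE-> _] /andP[_].
- have [a [b [/and3P[ab aY _] aX]]] :=
    connect_exit (P := fun w => w \notin X) (sY y v yY vY) yX (introT negPn vX).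
  rewrite negbK => bX.
  have := subsetP (nonmixed_out sX nmX aX bX ab) z zX.
  by have := side a aY; rewrite !inE => /andP[/negbTE-> _] /andP[].
Qed.

Lemma maximal_weak_hubs_meet (X Y : {set V}) v :
  maximal_weak_hub arc X -> ~ mixed arc X -> maximal_weak_hub arc Y ->
  v \in X -> v \in Y -> X = Y.
Proof.
move=> [hX maxX] nmX [hY maxY] vX vY.
have [[sX _] [sY [z side]]] := (hX, hY).
have [zX | zX] := boolP (z \in X).
  exact: maxY _ hX (one_sided_centre_inside sX nmX sY zX vX vY side).
(* otherwise X lies on the same side of z as Y, and X :|: Y is a weak hub *)
suff hXY : weak_hub arc (X :|: Y).
  by apply/esym/(maxX _ hY); rewrite -(maxY _ hXY (subsetUr X Y)) subsetUl.
split; first exact: strong_inU sX sY vX vY.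
exists z; case: side => /subsetP side; [left | right];
  apply/subsetP => w /setUP[wX | /side //].
- have vz : arc v z by move: (side v vY); rewrite !inE => /andP[].
  exact: subsetP (nonmixed_in sX nmX zX vX vz) w wX.
- have zv : arc z v by move: (side v vY); rewrite !inE => /andP[].
  exact: subsetP (nonmixed_out sX nmX zX vX zv) w wX.
Qed.

End WeakHubs.

Definition classicb (P : Prop) : bool :=
  if excluded_middle_informative P then true else false.

Lemma classicbP (P : Prop) : reflect P (classicb P).
Proof. by rewrite /classicb; case: excluded_middle_informative => H; constructor. Qed.

Section NonMixedHubs.
Variables (V : finType) (arc : rel V).
Hypothesis arc_lsc : locally_semicomplete arc.
Hypothesis arc_conn : forall x y, connect (fun a b => arc a b || arc b a) x y.
Hypothesis nonmixed : forall X, maximal_weak_hub arc X -> ~ mixed arc X.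

(* A connected locally semicomplete digraph all of whose arcs lie in digons
   is complete: the set of vertices equal or adjacent to x is closed under
   adjacency, since two out-neighbours of a vertex are adjacent. *)
Lemma symmetric_complete : (forall a b, arc a b -> arc b a) ->
  forall x y, x != y -> arc x y.
Proof.
move=> sym x y; apply/implyP; rewrite implyNb.
apply: (connect_propagate (Q := fun w => (x == w) || arc x w) (arc_conn x y)).
  by rewrite eqxx.
move=> a b ab /orP[/eqP-> | xa].
  by case/orP: ab => [-> | /sym ->]; rewrite orbT.
have {}ab : arc a b by case/orP: ab => // /sym.
have [// | nxb] := eqVneq x b.
have [outa _] := arc_lsc a.
have := outa x b; rewrite !inE (sym _ _ xa) ab => /(_ isT isT nxb) /orP[-> | /sym ->];
  by rewrite orbT.
Qed.

Definition hubless (v : V) : Prop := forall X, maximal_weak_hub arc X -> v \notin X.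

(* Every arc at a hubless vertex v lies in a digon: otherwise [set v] would
   be a weak hub, contained in some maximal one. *)
Lemma hubless_digon v w : hubless v -> arc v w || arc w v -> arc v w && arc w v.
Proof.
move=> hv vw; apply/negPn/negP => nd.
have one_way : (arc v w && ~~ arc w v) || (arc w v && ~~ arc v w).
  by move: vw nd; case: (arc v w); case: (arc w v).
have [Y [mY vY]] := maximal_weak_hub_above (weak_hub_singleton one_way).
by move: (hv Y mY); rewrite (subsetP vY v (set11 v)).
Qed.

(* A neighbour u of a hubless vertex v is hubless: a maximal hub X through u
   would lie on one side of v, contradicting the digon between u and v. *)
Lemma hubless_adjacent v u : hubless v -> arc v u || arc u v -> hubless u.
Proof.
move=> hv vu X mX; apply/negP => uX.
have /andP[v_u u_v] := hubless_digon hv vu.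
have := subsetP (nonmixed_in arc_lsc mX.1.1 (nonmixed mX) (hv X mX) uX u_v) u uX.
by rewrite !inE v_u.
Qed.

Lemma hubless_semicomplete w0 : hubless w0 ->
  semicomplete arc /\ exists x, universal arc x.
Proof.
move=> hw0.
have all_hubless x : hubless x.
  apply: (connect_propagate (Q := hubless) (arc_conn w0 x) hw0) => a b ab ha.
  exact: hubless_adjacent ha ab.
have sym a b : arc a b -> arc b a.
  by move=> ab; case/andP: (hubless_digon (all_hubless a) (introT orP (or_introl ab))).
have complete := symmetric_complete sym.
split; first by move=> y z _ _ yz; rewrite complete.
by exists w0 => y yw0; rewrite !complete // eq_sym.
Qed.

Section HubPartition.
Hypothesis covered : forall v, exists X, maximal_weak_hub arc X /\ v \in X.

Definition maximal_hubs : {set {set V}} := [set X | classicb (maximal_weak_hub arc X)].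

Definition hub (i : 'I_#|maximal_hubs|) : {set V} := enum_val i.

Lemma hub_maximal i : maximal_weak_hub arc (hub i).
Proof. by apply/classicbP; have := enum_valP i; rewrite inE. Qed.

Lemma hub_strong i : strong_in arc (hub i).
Proof. by have [[]] := hub_maximal i. Qed.

Lemma hub_nonempty i : exists a, a \in hub i.
Proof. by have [/set0Pn[a aX] _] := hub_strong i; exists a. Qed.

Lemma hub_eq i j v : v \in hub i -> v \in hub j -> i = j.
Proof.
move=> vi vj; apply: enum_val_inj.
exact: maximal_weak_hubs_meet (hub_maximal i) (nonmixed (hub_maximal i)) (hub_maximal j) vi vj.
Qed.

Lemma hub_cover v : exists i, v \in hub i.
Proof.
have [X [mX vX]] := covered v.
have XP : X \in maximal_hubs by rewrite inE; apply/classicbP.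
by exists (enum_rank_in XP X); rewrite /hub enum_rankK_in.
Qed.

Lemma hub_partition : is_partition hub.
Proof.
split; last exact: hub_cover.
move=> i j ij; rewrite disjoint_subset; apply/subsetP => v vi; rewrite inE.
by apply: contra ij => vj; rewrite (hub_eq vi vj).
Qed.

(* Non-mixedness makes the hubs modules: one arc from hub i to hub j forces
   every arc from hub i to hub j, and no arc back. *)
Lemma contraction_arcs i j a b : contraction arc hub i j ->
  a \in hub i -> b \in hub j -> arc a b && ~~ arc b a.
Proof.
case/andP=> ij /existsP[a0 /andP[a0i /existsP[b0 /andP[b0j a0b0]]]] ai bj.
have a0j : a0 \notin hub j by apply: contra ij => a0j; rewrite (hub_eq a0i a0j).
have bi : b \notin hub i by apply: contra ij => bi; rewrite (hub_eq bi bj).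
have sj := nonmixed_out arc_lsc (hub_strong j) (nonmixed (hub_maximal j)) a0j b0j a0b0.
have := subsetP sj b bj; rewrite !inE => /andP[_ a0b].
have si := nonmixed_in arc_lsc (hub_strong i) (nonmixed (hub_maximal i)) bi a0i a0b.
by have := subsetP si a ai; rewrite !inE andbC.
Qed.

Lemma contraction_of_arc i j a b :
  a \in hub i -> b \in hub j -> i != j -> arc a b -> contraction arc hub i j.
Proof.
move=> ai bj ij ab; rewrite /contraction ij /=.
by apply/existsP; exists a; rewrite ai /=; apply/existsP; exists b; rewrite bj.
Qed.

Lemma hub_out_side x a u : contraction arc hub x a -> u \in hub x ->
  hub a \subset outN arc u :\: inN arc u.
Proof.
by move=> xa ux; apply/subsetP => w wa; rewrite !inE andbC (contraction_arcs xa ux wa).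
Qed.

Lemma hub_in_side x a u : contraction arc hub a x -> u \in hub x ->
  hub a \subset inN arc u :\: outN arc u.
Proof.
by move=> ax ux; apply/subsetP => w wa; rewrite !inE andbC (contraction_arcs ax wa ux).
Qed.

Lemma contraction_connected : forall i j,
  connect (fun a b => contraction arc hub a b || contraction arc hub b a) i j.
Proof.
move=> i j; have [a ai] := hub_nonempty i; have [b bj] := hub_nonempty j.
apply: (connect_propagate
  (Q := fun w => forall l, w \in hub l -> connect (fun a b =>
          contraction arc hub a b || contraction arc hub b a) i l) (arc_conn a b)) bj.
  by move=> l al; rewrite (hub_eq ai al).
move=> u w uw Qu l wl; have [m um] := hub_cover u.
have [<- | ml] := eqVneq m l; first exact: Qu.
apply: connect_trans (Qu m um) (connect1 _).
case/orP: uw => [uw | wu]; first by rewrite (contraction_of_arc um wl ml uw).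
by rewrite (contraction_of_arc wl um _ wu) ?orbT // eq_sym.
Qed.

(* The union of three hubs forming a directed triangle is strongly
   connected, so no vertex sees it on one side: it would be a weak hub
   strictly larger than the maximal hub a. *)
Lemma hub_triangle_two_sided a b c u :
  contraction arc hub a b -> contraction arc hub b c -> contraction arc hub c a ->
  ~ (hub a :|: hub b :|: hub c \subset inN arc u :\: outN arc u \/
     hub a :|: hub b :|: hub c \subset outN arc u :\: inN arc u).
Proof.
move=> ab bc ca side.
set Z := hub a :|: hub b :|: hub c.
have aZ : hub a \subset Z by rewrite /Z -setUA subsetUl.
have bZ : hub b \subset Z by rewrite /Z setUAC subsetUr.
have cZ : hub c \subset Z by rewrite /Z subsetUr.
have [wa wai] := hub_nonempty a; have [wb wbi] := hub_nonempty b.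
have [wc wci] := hub_nonempty c.
have step i j wi wj : contraction arc hub i j -> hub i \subset Z -> hub j \subset Z ->
    wi \in hub i -> wj \in hub j -> connect (arc_in arc Z) wi wj.
  move=> ij iZ jZ wii wjj; apply: connect1.
  by rewrite /arc_in (subsetP iZ) ?(subsetP jZ) // !andbT; case/andP: (contraction_arcs ij wii wjj).
have inside i w w' : hub i \subset Z -> w \in hub i -> w' \in hub i ->
    connect (arc_in arc Z) w w'.
  by move=> iZ wi w'i; apply: connect_arc_in_mono iZ _; have [_ ->] := hub_strong i.
have ab' := step _ _ _ _ ab aZ bZ wai wbi; have bc' := step _ _ _ _ bc bZ cZ wbi wci.
have ca' := step _ _ _ _ ca cZ aZ wci wai.
have sZ : strong_in arc Z.
  apply: (@strong_in_star _ _ Z wa); first exact: (subsetP aZ).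
  move=> w /setUP[/setUP[wA | wB] | wC]; split.
  - exact: inside aZ wA wai.
  - exact: inside aZ wai wA.
  - exact: connect_trans (inside _ _ _ bZ wB wbi) (connect_trans bc' ca').
  - exact: connect_trans ab' (inside _ _ _ bZ wbi wB).
  - exact: connect_trans (inside _ _ _ cZ wC wci) ca'.
  - exact: connect_trans ab' (connect_trans bc' (inside _ _ _ cZ wci wC)).
have [_ maxA] := hub_maximal a.
have ZA : Z = hub a by apply: maxA aZ; split; last by exists u.
have wbA : wb \in hub a by rewrite -ZA (subsetP bZ).
by case/andP: ab; rewrite (hub_eq wbA wbi) eqxx.
Qed.

(* The contraction is a locally transitive local tournament: local
   semicompleteness passes to hubs through representatives, and a directed
   triangle in a neighbourhood is excluded by hub_triangle_two_sided. *)
Lemma contraction_loc_trans : loc_trans_tournament (contraction arc hub).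
Proof.
have adjacent i j a b : a \in hub i -> b \in hub j -> i != j ->
    arc a b || arc b a -> contraction arc hub i j || contraction arc hub j i.
  move=> ai bj ij /orP[ab | ba]; first by rewrite (contraction_of_arc ai bj ij ab).
  by rewrite (contraction_of_arc bj ai _ ba) ?orbT // eq_sym.
have distinct i j a b : a \in hub i -> b \in hub j -> i != j -> a != b.
  by move=> ai bj; apply: contra => /eqP ab; rewrite -ab in bj; rewrite (hub_eq ai bj).
split.
- by move=> x; rewrite /contraction eqxx.
- move=> x y xy; have [a ax] := hub_nonempty x; have [b bY] := hub_nonempty y.
  apply/negP => yx; case/andP: (contraction_arcs xy ax bY) => _.
  by case/andP: (contraction_arcs yx bY ax) => ->.
- move=> x a b xa xb ab; have [u ux] := hub_nonempty x.
  have [wa wai] := hub_nonempty a; have [wb wbi] := hub_nonempty b.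
  apply: (adjacent _ _ _ _ wai wbi ab); have [out _] := arc_lsc u.
  apply: out (distinct _ _ _ _ wai wbi ab); rewrite inE.
  + by case/andP: (contraction_arcs xa ux wai).
  + by case/andP: (contraction_arcs xb ux wbi).
- move=> x a b ax bx ab; have [u ux] := hub_nonempty x.
  have [wa wai] := hub_nonempty a; have [wb wbi] := hub_nonempty b.
  apply: (adjacent _ _ _ _ wai wbi ab); have [_ inn] := arc_lsc u.
  apply: inn (distinct _ _ _ _ wai wbi ab); rewrite inE.
  + by case/andP: (contraction_arcs ax wai ux).
  + by case/andP: (contraction_arcs bx wbi ux).
- move=> x a b c xa xb xc ab bc ca; have [u ux] := hub_nonempty x.
  apply: (hub_triangle_two_sided (u := u) ab bc ca); right.
  by rewrite !subUset (hub_out_side xa ux) (hub_out_side xb ux) (hub_out_side xc ux).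
- move=> x a b c ax bx cx ab bc ca; have [u ux] := hub_nonempty x.
  apply: (hub_triangle_two_sided (u := u) ab bc ca); left.
  by rewrite !subUset (hub_in_side ax ux) (hub_in_side bx ux) (hub_in_side cx ux).
Qed.

(* There are at least two hubs: a single hub would be all of V and would
   contain the vertex witnessing that it is a weak hub, giving a loop. *)
Lemma hub_count_ge2 : loopless arc -> 0 < #|V| -> 1 < #|maximal_hubs|.
Proof.
move=> noloop /card_gt0P[v0 _]; rewrite ltnNge; apply/negP => small.
have ord0_only (i : 'I_#|maximal_hubs|) : val i = 0.
  by apply/eqP; rewrite -leqn0 -ltnS (leq_trans (ltn_ord i) small).
have [i0 _] := hub_cover v0.
have [[_ [x side]] _] := hub_maximal i0.
have [l xl] := hub_cover x.
have li0 : l = i0 by apply: val_inj; rewrite !ord0_only.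
rewrite li0 in xl; have := noloop x.
by case: side => /subsetP/(_ x xl); rewrite !inE => /andP[_ ->].
Qed.

End HubPartition.
End NonMixedHubs.

Theorem lemma4p3 (V : finType) (arc : rel V) :
  loopless arc ->
  dconnected arc ->
  locally_semicomplete arc ->
  (forall X : {set V}, maximal_weak_hub arc X -> ~ mixed arc X) ->
  (semicomplete arc /\ exists x, universal arc x) \/
  (exists (k : nat) (X : 'I_k -> {set V}),
     [/\ 2 <= k, is_partition X,
         forall i, strong_in arc (X i)
       & round (contraction arc X)]).
Proof.
move=> noloop [V_ne conn] lsc nonmixed.
case: (classic (exists v, hubless arc v)) => [[w0 hw0] | no_hubless].
  by left; exact: (hubless_semicomplete lsc conn nonmixed hw0).
have covered v : exists X, maximal_weak_hub arc X /\ v \in X.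
  apply: NNPP => nocover; apply: no_hubless; exists v => X mX.
  by apply/negP => vX; apply: nocover; exists X.
right; exists #|maximal_hubs arc|, (@hub V arc); split.
- exact: hub_count_ge2 covered noloop V_ne.
- exact: hub_partition lsc nonmixed covered.
- exact: hub_strong.
- apply: loc_trans_round.
    exact: contraction_loc_trans lsc nonmixed.
  exact: contraction_connected lsc conn nonmixed covered.
Qed.
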